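(* Let $i,j\in\{1,2,3,4\}$ and let $w\in W(\mathrm{F}_4)$ satisfy $w\beta_i=\beta_j$. Then $we_iw^{-1}=e_j$ in $\mathrm{Br}(\mathrm{F}_4)$.
   Context: Let $\delta$ be an indeterminate. $\mathrm{Br}(\mathrm{F}_4)$ is the unital associative $\mathbb Z[\delta^{\pm1}]$-algebra generated by $r_1,r_2,r_3,r_4,e_1,e_2,e_3,e_4$ subject to the relations: $r_i^2=1$ and $r_ie_i=e_ir_i=e_i$ for all $i$; $e_i^2=\delta e_i$ for $i\in\{3,4\}$; $e_i^2=\delta^2e_i$ for $i\in\{1,2\}$; for $\{i,j\}\in\{\{1,3\},\{1,4\},\{2,4\}\}$: $r_ir_j=r_jr_i$, $e_ir_j=r_je_i$, $e_ie_j=e_je_i$; for $(i,j)\in\{(1,2),(2,1),(3,4),(4,3)\}$: $r_ir_jr_i=r_jr_ir_j$, $r_jr_ie_j=e_ie_j$, $r_ie_jr_i=r_je_ir_j$; and $r_2r_3r_2r_3=r_3r_2r_3r_2$, $r_2r_3e_2=r_3e_2$, $r_2e_3r_2e_3=e_3e_2e_3$, $(r_2r_3r_2)e_3=e_3(r_2r_3r_2)$, $e_2r_3e_2=\delta e_2$, $e_2e_3e_2=\delta e_2$, $e_2r_3r_2=e_2r_3$, $e_2e_3r_2=e_2e_3$. Let $\epsilon_1,\dots,\epsilon_4$ be the standard orthonormal basis of $\mathbb R^4$, $\beta_1=\frac12(\epsilon_1-\epsilon_2-\epsilon_3-\epsilon_4)$, $\beta_2=\epsilon_2$, $\beta_3=\epsilon_3-\epsilon_2$,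 $\beta_4=\epsilon_4-\epsilon_3$, simple roots of a root system $\Psi$ of type $\mathrm{F}_4$. $W(\mathrm{F}_4)$ is the group generated by the reflections $s_i=s_{\beta_i}$; since $r_1,\dots,r_4$ satisfy the Coxeter relations of $\mathrm{F}_4$, $s_i\mapsto r_i$ extends to a group homomorphism $W(\mathrm{F}_4)\to\mathrm{Br}(\mathrm{F}_4)^\times$, and elements of $W(\mathrm{F}_4)$ are identified with their images in $\mathrm{Br}(\mathrm{F}_4)$. *)

From HB Require Import structures.
From mathcomp Require Import all_boot all_order all_algebra.
Set Implicit Arguments. Unset Strict Implicit. Unset Printing Implicit Defensive.
Import Order.TTheory GRing.Theory Num.Theory.
Local Open Scope ring_scope.

Definition vec := 'rV[rat]_4.

(* eps_k, k = 1..4 ; coordinates indexed by 'I_4 = {0,..,3} *)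
Definition mkvec (a b c e : rat) : vec :=
  \row_(k < 4) nth 0 [:: a; b; c; e] k.

(* simple roots beta_1..beta_4 (beta_i for i outside 1..4 is 0, never used) *)
Definition beta (i : nat) : vec :=
  match i with
  | 1 => mkvec (1/2) (-(1/2)) (-(1/2)) (-(1/2))
  | 2 => mkvec 0 1 0 0
  | 3 => mkvec 0 (-1) 1 0
  | 4 => mkvec 0 0 (-1) 1
  | _ => 0%R
  end.

Definition dot (x y : vec) : rat := (x *m y^T) 0 0.

Definition refl (b x : vec) : vec := x - ((2 * dot x b) / dot b b) *: b.

(* A word u = [:: k1; ...; km] represents w = s_{k1} ... s_{km} in W(F4);
   its action on a vector: w x = s_{k1} (s_{k2} (... (s_{km} x))). *)
Definition wact (u : seq nat) (x : vec) : vec :=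
  foldr (fun k y => refl (beta k) y) x u.

Definition valid_word (u : seq nat) : bool := all (fun k => (0 < k <= 4)%N) u.

Definition wimg (R : pzRingType) (r : nat -> R) (u : seq nat) : R :=
  \prod_(k <- u) r k.

(* ---------- Defining relations of Br(F4) ----------
   A Z[delta^{+-1}]-algebra is a ring R together with a central unit d
   (the image of delta).  [BrF4_rel d r e] says that r_1..r_4, e_1..e_4 in R
   satisfy the defining relations of Br(F4). *)
Record BrF4_rel (R : pzRingType) (d : R) (r e : nat -> R) : Prop := {
  d_central : forall x : R, d * x = x * d;
  d_unit : exists d' : R, d * d' = 1 /\ d' * d = 1;
  r_sq : forall i, (0 < i <= 4)%N -> r i * r i = 1;
  re_l : forall i, (0 < i <= 4)%N -> r i * e i = e i;
  re_r : forall i, (0 < i <= 4)%N -> e i * r i = e i;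
  e_sq34 : forall i, (i == 3)%N || (i == 4)%N -> e i * e i = d * e i;
  e_sq12 : forall i, (i == 1)%N || (i == 2)%N -> e i * e i = d ^+ 2 * e i;
  comm_rel : forall i j,
    (i, j) \in [:: (1,3); (3,1); (1,4); (4,1); (2,4); (4,2)]%N ->
    [/\ r i * r j = r j * r i, e i * r j = r j * e i & e i * e j = e j * e i];
  braid_rel : forall i j,
    (i, j) \in [:: (1,2); (2,1); (3,4); (4,3)]%N ->
    [/\ r i * r j * r i = r j * r i * r j,
        r j * r i * e j = e i * e j &
        r i * e j * r i = r j * e i * r j];
  rel23_1 : r 2 * r 3 * r 2 * r 3 = r 3 * r 2 * r 3 * r 2;
  rel23_2 : r 2 * r 3 * e 2 = r 3 * e 2;
  rel23_3 : r 2 * e 3 * r 2 * e 3 = e 3 * e 2 * e 3;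
  rel23_4 : (r 2 * r 3 * r 2) * e 3 = e 3 * (r 2 * r 3 * r 2);
  rel23_5 : e 2 * r 3 * e 2 = d * e 2;
  rel23_6 : e 2 * e 3 * e 2 = d * e 2;
  rel23_7 : e 2 * r 3 * r 2 = e 2 * r 3;
  rel23_8 : e 2 * e 3 * r 2 = e 2 * e 3
}.

From HB Require Import structures.
From mathcomp Require Import all_boot all_order all_algebra.
From mathcomp Require Import ring.

Set Implicit Arguments.
Unset Strict Implicit.
Unset Printing Implicit Defensive.

Import GRing.Theory.
Local Open Scope ring_scope.

(* Every root x of F4 is v beta_c for a simple root beta_c and a word v in the
   simple reflections; put e_x := v e_c v^-1 in Br(F4).  The heart of the
   matter is the equivariance r_k e_x r_k = e_(s_k x) for the 48 roots and the
   four simple reflections.  Each of these 192 identities is certified by an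
   explicit chain of applications of the defining relations, which is checked
   by computation.  Induction on a word for w then gives w e_x w^-1 = e_(w x),
   and e_(beta_i) = e_i. *)

Definition step := (nat * nat * bool)%type.

Section WordRewriting.
Variables (R : pzRingType) (f : nat -> R) (rules : seq (seq nat * seq nat)).

Lemma wimg_cat s t : wimg f (s ++ t) = wimg f s * wimg f t.
Proof. exact: big_cat. Qed.

(* The step (p, n, b) replaces, at position p, the left side of rule n by its
   right side (or the converse if b). *)
Definition rewrite_at (w : seq nat) (st : step) : option (seq nat) :=
  let: (p, n, b) := st in
  let: (l0, r0) := nth ([::], [::]) rules n in
  let: (l, r) := if b then (r0, l0) else (l0, r0) in
  if take (size l) (drop p w) == l then Some (take p w ++ r ++ drop (p + size l) w)
  else None.

Fixpoint rewrite_chain (w : seq nat) (sts : seq step) : option (seq nat) :=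
  if sts is st :: sts' then
    if rewrite_at w st is Some w' then rewrite_chain w' sts' else None
  else Some w.

Hypothesis rules_sound : all (fun lr => wimg f lr.1 == wimg f lr.2) rules.

Lemma wimg_nth_rule n :
  wimg f (nth ([::], [::]) rules n).1 = wimg f (nth ([::], [::]) rules n).2.
Proof.
have [lt_n_rules | ] := ltnP n (size rules); last by move/(nth_default _) ->.
exact/eqP/(allP rules_sound)/mem_nth.
Qed.

Lemma wimg_splice w p l r :
  take (size l) (drop p w) = l -> wimg f l = wimg f r ->
  wimg f w = wimg f (take p w ++ r ++ drop (p + size l) w).
Proof.
move=> eq_l eq_lr.
rewrite -{1}(cat_take_drop p w) -{1}(cat_take_drop (size l) (drop p w)) eq_l.
by rewrite !wimg_cat drop_drop addnC eq_lr.
Qed.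

Lemma wimg_rewrite_at w st w' : rewrite_at w st = Some w' -> wimg f w = wimg f w'.
Proof.
case: st => [[p n] b] /=; have := wimg_nth_rule n.
case: (nth _ rules n) => l0 r0 /= eq_lr.
by case: b; case: ifP => // /eqP eq_l [<-]; apply: wimg_splice.
Qed.

Lemma wimg_rewrite_chain sts w w' :
  rewrite_chain w sts = Some w' -> wimg f w = wimg f w'.
Proof.
elim: sts w => [|st sts IH] w /=; first by case=> ->.
case E: (rewrite_at w st) => [w1|] // /IH <-.
exact: wimg_rewrite_at E.
Qed.

End WordRewriting.

Definition coords := (rat * rat * rat * rat)%type.

Definition vec_of (x : coords) : vec := let: (a, b, c, e) := x in mkvec a b c e.

Definition beta_coords (i : nat) : coords :=
  match i with
  | 1%N => (1/2, -(1/2), -(1/2), -(1/2))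
  | 2%N => (0, 1, 0, 0)
  | 3%N => (0, -1, 1, 0)
  | 4%N => (0, 0, -1, 1)
  | _ => (0, 0, 0, 0)
  end.

Definition simple_refl (k : nat) (x : coords) : coords :=
  let: (a, b, c, e) := x in
  match k with
  | 1%N => let t := (a - b - c - e) / 2 in (a - t, b + t, c + t, e + t)
  | 2%N => (a, - b, c, e)
  | 3%N => (a, c, b, e)
  | 4%N => (a, b, e, c)
  | _ => x
  end.

Lemma beta_vec_of i : (0 < i <= 4)%N -> beta i = vec_of (beta_coords i).
Proof. by case: i => [|[|[|[|[|i]]]]]. Qed.

Lemma vec_of_inj : injective vec_of.
Proof.
move=> [[[a b] c] e] [[[a' b'] c'] e'] /rowP eq_ab.
move: (eq_ab 0%R) (eq_ab 1%R) (eq_ab 2%R) (eq_ab 3%R).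
by rewrite !mxE /= => -> -> -> ->.
Qed.

Lemma dot_mkvec a b c e a' b' c' e' :
  dot (mkvec a b c e) (mkvec a' b' c' e') = a * a' + b * b' + c * c' + e * e'.
Proof. by rewrite /dot !mxE !big_ord_recr big_ord0 /= !mxE /= add0r. Qed.

Lemma refl_vec_of k x :
  (0 < k <= 4)%N -> refl (beta k) (vec_of x) = vec_of (simple_refl k x).
Proof.
case: x => [[[a b] c] e]; case: k => [|[|[|[|[|k]]]]] // _;
  rewrite /refl /= !dot_mkvec; apply/rowP => m; rewrite !mxE;
  by case: m => [[|[|[|[|m]]]] lt_m4] //=; field.
Qed.

Lemma wact_vec_of u x :
  valid_word u -> wact u (vec_of x) = vec_of (foldr simple_refl x u).
Proof. by elim: u => [|k u IH] //= /andP [le_k4 /IH ->]; rewrite refl_vec_of. Qed.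

(* The letters 1..4 stand for r_1..r_4 and 5..8 for e_1..e_4. *)
Definition br_rules : seq (seq nat * seq nat) := [::
  ([:: 1; 1], [::]); ([:: 2; 2], [::]); ([:: 3; 3], [::]); ([:: 4; 4], [::]);
  ([:: 1; 5], [:: 5]); ([:: 5; 1], [:: 5]); ([:: 2; 6], [:: 6]); ([:: 6; 2], [:: 6]);
  ([:: 3; 7], [:: 7]); ([:: 7; 3], [:: 7]); ([:: 4; 8], [:: 8]); ([:: 8; 4], [:: 8]);
  ([:: 1; 3], [:: 3; 1]); ([:: 5; 3], [:: 3; 5]); ([:: 7; 1], [:: 1; 7]);
  ([:: 1; 4], [:: 4; 1]); ([:: 5; 4], [:: 4; 5]); ([:: 8; 1], [:: 1; 8]);
  ([:: 2; 4], [:: 4; 2]); ([:: 6; 4], [:: 4; 6]); ([:: 8; 2], [:: 2; 8]);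
  ([:: 1; 2; 1], [:: 2; 1; 2]); ([:: 1; 6; 1], [:: 2; 5; 2]);
  ([:: 3; 4; 3], [:: 4; 3; 4]); ([:: 3; 8; 3], [:: 4; 7; 4]);
  ([:: 2; 3; 2; 3], [:: 3; 2; 3; 2]); ([:: 2; 3; 6], [:: 3; 6]);
  ([:: 2; 3; 2; 7], [:: 7; 2; 3; 2]); ([:: 6; 3; 2], [:: 6; 3])]%N.

(* The root x = v beta_c is recorded as (x, (v, c)). *)
Definition root_table : seq (coords * (seq nat * nat)) := [::
  ((-1, -1, 0, 0)%R, ([:: 2; 3; 4; 1; 2; 3], 3));
  ((-1, 0, -1, 0)%R, ([:: 3; 2; 3; 4; 1; 2; 3], 3));
  ((-1, 0, 0, -1)%R, ([:: 4; 3; 2; 3; 4; 1; 2; 3], 3));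
  ((-1, 0, 0, 0)%R, ([:: 1; 2; 3; 4; 2; 3; 2; 1], 1));
  ((-1, 0, 0, 1)%R, ([:: 1; 2; 3], 3));
  ((-1, 0, 1, 0)%R, ([:: 4; 1; 2; 3], 3));
  ((-1, 1, 0, 0)%R, ([:: 3; 4; 1; 2; 3], 3));
  ((-(1/2), -(1/2), -(1/2), -(1/2))%R, ([:: 2; 3; 4; 2; 3; 2; 1], 1));
  ((-(1/2), -(1/2), -(1/2), 1/2)%R, ([:: 2; 3; 2; 1], 1));
  ((-(1/2), -(1/2), 1/2, -(1/2))%R, ([:: 4; 2; 3; 2; 1], 1));
  ((-(1/2), -(1/2), 1/2, 1/2)%R, ([:: 2; 1], 1));
  ((-(1/2), 1/2, -(1/2), -(1/2))%R, ([:: 3; 4; 2; 3; 2; 1], 1));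
  ((-(1/2), 1/2, -(1/2), 1/2)%R, ([:: 3; 2; 1], 1));
  ((-(1/2), 1/2, 1/2, -(1/2))%R, ([:: 4; 3; 2; 1], 1));
  ((-(1/2), 1/2, 1/2, 1/2)%R, ([:: 1], 1));
  ((0, -1, -1, 0)%R, ([:: 2; 3], 3));
  ((0, -1, 0, -1)%R, ([:: 4; 2; 3], 3));
  ((0, -1, 0, 0)%R, ([:: 2], 2));
  ((0, -1, 0, 1)%R, ([:: 4], 3));
  ((0, -1, 1, 0)%R, ([::], 3));
  ((0, 0, -1, -1)%R, ([:: 3; 4; 2; 3], 3));
  ((0, 0, -1, 0)%R, ([:: 3; 2], 2));
  ((0, 0, -1, 1)%R, ([::], 4));
  ((0, 0, 0, -1)%R, ([:: 4; 3; 2], 2));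
  ((0, 0, 0, 1)%R, ([:: 4; 3], 2));
  ((0, 0, 1, -1)%R, ([:: 4], 4));
  ((0, 0, 1, 0)%R, ([:: 3], 2));
  ((0, 0, 1, 1)%R, ([:: 3; 4; 2], 3));
  ((0, 1, -1, 0)%R, ([:: 3], 3));
  ((0, 1, 0, -1)%R, ([:: 4; 3], 3));
  ((0, 1, 0, 0)%R, ([::], 2));
  ((0, 1, 0, 1)%R, ([:: 4; 2], 3));
  ((0, 1, 1, 0)%R, ([:: 2], 3));
  ((1/2, -(1/2), -(1/2), -(1/2))%R, ([::], 1));
  ((1/2, -(1/2), -(1/2), 1/2)%R, ([:: 4; 3; 2], 1));
  ((1/2, -(1/2), 1/2, -(1/2))%R, ([:: 3; 2], 1));
  ((1/2, -(1/2), 1/2, 1/2)%R, ([:: 3; 4; 2; 3; 2], 1));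
  ((1/2, 1/2, -(1/2), -(1/2))%R, ([:: 2], 1));
  ((1/2, 1/2, -(1/2), 1/2)%R, ([:: 4; 2; 3; 2], 1));
  ((1/2, 1/2, 1/2, -(1/2))%R, ([:: 2; 3; 2], 1));
  ((1/2, 1/2, 1/2, 1/2)%R, ([:: 2; 3; 4; 2; 3; 2], 1));
  ((1, -1, 0, 0)%R, ([:: 3; 4; 1; 2], 3));
  ((1, 0, -1, 0)%R, ([:: 4; 1; 2], 3));
  ((1, 0, 0, -1)%R, ([:: 1; 2], 3));
  ((1, 0, 0, 0)%R, ([:: 1; 2; 3; 4; 2; 3; 2], 1));
  ((1, 0, 0, 1)%R, ([:: 4; 3; 2; 3; 4; 1; 2], 3));
  ((1, 0, 1, 0)%R, ([:: 3; 2; 3; 4; 1; 2], 3));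
  ((1, 1, 0, 0)%R, ([:: 2; 3; 4; 1; 2], 3))].

Definition F4_roots : seq coords := unzip1 root_table.

Definition root_conjugator (x : coords) : seq nat * nat :=
  nth ([::], 0%N) (unzip2 root_table) (index x F4_roots).

Definition root_elem_word (x : coords) : seq nat :=
  let: (v, c) := root_conjugator x in v ++ (c + 4)%N :: rev v.

(* The certificate for the pair (x, s_k) rewrites r_k e_x r_k into e_(s_k x). *)
Definition equivariance_certs : seq (seq (seq step)) := [:: [:: [:: (7, 3, true); (10, 3, true); (8, 24, true); (9, 1, true); (10, 20, true); (10, 2, true); (13, 2, true); (11, 24, false); (3, 15, true); (20, 15, false); (4, 18, true); (19, 18, false); (5, 23, true); (17, 23, true); (2, 12, true); (21, 12, false); (0, 21, false); (22, 21, false); (2, 25, false); (19, 25, true); (1, 12, false); (22, 12, true); (5, 18, false); (18, 18, true); (7, 2, false); (14, 2, false); (6, 1, false); (11, 1, false); (4, 23, false); (10, 23, false); (3, 18, false); (12, 18, true); (2, 15, false); (13, 15, true); (6, 3, false); (7, 3, false)]; [:: (0, 1, false); (11, 1, false)]; [::]; [:: (7, 1, true); (8, 2, true); (9, 1, true); (10, 27, false); (0, 18, true); (19, 18, false); (1, 23, true); (17, 23, true); (3, 12, true); (16, 12, false); (4, 25, true); (13, 25, false); (7, 2, false); (10, 2, false); (6, 1, false); (7, 1, false)]];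
  [:: [:: (8, 3, true); (11, 3, true); (9, 24, true); (10, 1, true); (11, 20, true); (11, 2, true); (14, 2, true); (12, 24, false); (0, 12, false); (25, 12, true); (4, 15, true); (21, 15, false); (5, 18, true); (20, 18, false); (6, 23, true); (18, 23, true); (3, 12, true); (22, 12, false); (1, 21, false); (23, 21, false); (3, 25, false); (20, 25, true); (2, 12, false); (23, 12, true); (6, 18, false); (19, 18, true); (8, 2, false); (15, 2, false); (7, 1, false); (12, 1, false); (5, 23, false); (11, 23, false); (4, 18, false); (13, 18, true); (3, 15, false); (14, 15, true); (7, 3, false); (8, 3, false)]; [:: (8, 0, true); (9, 14, true); (0, 25, false); (15, 25, true); (3, 18, false); (14, 18, true); (4, 21, true); (12, 21, true); (6, 12, false); (11, 12, true); (7, 0, false); (8, 0, false)]; [:: (0, 2, false); (13, 2, false)]; [::]];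
  [:: [:: (9, 3, true); (12, 3, true); (10, 24, true); (11, 1, true); (12, 20, true); (12, 2, true); (15, 2, true); (13, 24, false); (0, 15, false); (27, 15, true); (1, 12, false); (26, 12, true); (5, 15, true); (22, 15, false); (6, 18, true); (21, 18, false); (7, 23, true); (19, 23, true); (4, 12, true); (23, 12, false); (2, 21, false); (24, 21, false); (4, 25, false); (21, 25, true); (3, 12, false); (24, 12, true); (7, 18, false); (20, 18, true); (9, 2, false); (16, 2, false); (8, 1, false); (13, 1, false); (6, 23, false); (12, 23, false); (5, 18, false); (14, 18, true); (4, 15, false); (15, 15, true); (8, 3, false); (9, 3, false)]; [:: (9, 0, true); (10, 14, true); (0, 18, false); (19, 18, true); (1, 25, false); (16, 25, true); (4, 18, false); (15, 18, true); (5, 21, true); (13, 21, true); (7, 12, false); (12, 12, true); (8, 0, false); (9, 0, false)]; [:: (9, 1, true); (10, 2, true); (11, 1, true); (12, 27, false); (0, 23, false); (22, 23, false); (2, 18, true); (21, 18, false); (3, 23, true); (19, 23, true); (5, 12, true); (18, 12, false); (6, 25, true); (15, 25, false); (9, 2, false); (12, 2, false); (8, 1, false); (9, 1, false)]; [:: (0, 3, false); (15, 3, false)]];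
  [:: [:: (0, 0, false); (15, 0, false)]; [:: (9, 1, true); (12, 1, true); (10, 22, true); (11, 2, true); (12, 26, true); (15, 2, true); (14, 28, true); (14, 0, true); (17, 0, true); (15, 22, false); (0, 21, true); (30, 21, true); (2, 12, false); (29, 12, true); (3, 15, false); (28, 15, true); (7, 21, true); (23, 21, true); (9, 0, false); (20, 0, false); (6, 12, true); (21, 12, false); (4, 21, false); (22, 21, false); (6, 25, false); (19, 25, true); (5, 12, false); (22, 12, true); (9, 1, false); (16, 1, false); (8, 2, false); (13, 2, false); (6, 21, false); (12, 21, false); (8, 1, false); (9, 1, false)]; [:: (9, 3, true); (10, 16, true); (4, 18, true); (15, 18, false); (0, 12, true); (19, 12, false); (1, 25, true); (16, 25, false); (4, 23, false); (14, 23, false); (3, 18, false); (16, 18, true); (6, 18, true); (13, 18, false); (7, 15, true); (12, 15, false); (8, 3, false); (9, 3, false)]; [:: (9, 2, true); (10, 13, true); (0, 15, true); (19, 15, false); (1, 18, true); (18, 18, false); (2, 23, true); (16, 23, true); (4, 25, true); (13, 25, false); (7, 12, true); (12, 12, false); (8, 2, false); (9, 2, false)]];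
  [:: [:: (0, 0, false); (5, 0, false)]; [:: (4, 0, true); (5, 14, true); (0, 21, true); (8, 21, true); (2, 12, false); (7, 12, true); (3, 0, false); (4, 0, false)]; [:: (4, 1, true); (5, 2, true); (6, 1, true); (7, 27, false); (0, 12, true); (13, 12, false); (1, 25, true); (10, 25, false); (4, 2, false); (7, 2, false); (3, 1, false); (4, 1, false)]; [::]];
  [:: [:: (0, 15, false); (9, 15, true); (1, 0, false); (6, 0, false)]; [:: (5, 0, true); (6, 14, true); (0, 18, false); (11, 18, true); (1, 21, true); (9, 21, true); (3, 12, false); (8, 12, true); (4, 0, false); (5, 0, false)]; [::]; [:: (0, 3, false); (7, 3, false)]];
  [:: [:: (0, 12, false); (11, 12, true); (1, 15, false); (10, 15, true); (2, 0, false); (7, 0, false)]; [::]; [:: (0, 2, false); (9, 2, false)]; [:: (6, 1, true); (7, 2, true); (8, 1, true); (9, 27, false); (0, 23, true); (16, 23, true); (2, 12, true); (15, 12, false); (3, 25, true); (12, 25, false); (6, 2, false); (9, 2, false); (5, 1, false); (6, 1, false)]];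
  [:: [::]; [:: (0, 1, false); (13, 1, false)]; [:: (8, 3, true); (9, 16, true); (3, 18, true); (14, 18, false); (0, 25, true); (15, 25, false); (3, 23, false); (13, 23, false); (2, 18, false); (15, 18, true); (5, 18, true); (12, 18, false); (6, 15, true); (11, 15, false); (7, 3, false); (8, 3, false)]; [:: (8, 2, true); (9, 13, true); (0, 18, true); (17, 18, false); (1, 23, true); (15, 23, true); (3, 25, true); (12, 25, false); (6, 12, true); (11, 12, false); (7, 2, false); (8, 2, false)]];
  [:: [:: (5, 1, true); (8, 1, true); (6, 22, true); (7, 2, true); (8, 26, true); (11, 2, true); (10, 28, true); (10, 0, true); (13, 0, true); (11, 22, false); (3, 21, true); (19, 21, true); (5, 0, false); (16, 0, false); (2, 12, true); (17, 12, false); (0, 21, false); (18, 21, false); (2, 25, false); (15, 25, true); (1, 12, false); (18, 12, true); (5, 1, false); (12, 1, false); (4, 2, false); (9, 2, false); (2, 21, false); (8, 21, false); (4, 1, false); (5, 1, false)]; [:: (0, 1, false); (7, 1, false)]; [:: (5, 2, true); (6, 13, true); (0, 25, true); (9, 25, false); (3, 12, true); (8, 12, false); (4, 2, false); (5, 2, false)]; [::]];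
  [:: [:: (6, 1, true); (9, 1, true); (7, 22, true); (8, 2, true); (9, 26, true); (12, 2, true); (11, 28, true); (11, 0, true); (14, 0, true); (12, 22, false); (0, 15, false); (25, 15, true); (4, 21, true); (20, 21, true); (6, 0, false); (17, 0, false); (3, 12, true); (18, 12, false); (1, 21, false); (19, 21, false); (3, 25, false); (16, 25, true); (2, 12, false); (19, 12, true); (6, 1, false); (13, 1, false); (5, 2, false); (10, 2, false); (3, 21, false); (9, 21, false); (5, 1, false); (6, 1, false)]; [:: (0, 18, false); (11, 18, true); (1, 1, false); (8, 1, false)]; [::]; [:: (0, 3, false); (9, 3, false)]];
  [:: [:: (3, 1, true); (6, 1, true); (4, 22, true); (0, 21, false); (8, 21, false); (2, 1, false); (5, 1, false); (1, 0, false); (2, 0, false)]; [:: (0, 1, false); (3, 1, false)]; [::]; [:: (3, 3, true); (4, 16, true); (0, 18, true); (7, 18, false); (1, 15, true); (6, 15, false); (2, 3, false); (3, 3, false)]];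
  [:: [:: (7, 1, true); (10, 1, true); (8, 22, true); (9, 2, true); (10, 26, true); (13, 2, true); (12, 28, true); (12, 0, true); (15, 0, true); (13, 22, false); (0, 12, false); (27, 12, true); (1, 15, false); (26, 15, true); (5, 21, true); (21, 21, true); (7, 0, false); (18, 0, false); (4, 12, true); (19, 12, false); (2, 21, false); (20, 21, false); (4, 25, false); (17, 25, true); (3, 12, false); (20, 12, true); (7, 1, false); (14, 1, false); (6, 2, false); (11, 2, false); (4, 21, false); (10, 21, false); (6, 1, false); (7, 1, false)]; [::]; [:: (0, 2, false); (11, 2, false)]; [:: (7, 2, true); (8, 13, true); (0, 23, true); (14, 23, true); (2, 25, true); (11, 25, false); (5, 12, true); (10, 12, false); (6, 2, false); (7, 2, false)]];
  [:: [:: (4, 1, true); (7, 1, true); (5, 22, true); (0, 12, false); (11, 12, true); (1, 21, false); (9, 21, false); (3, 1, false); (6, 1, false); (2, 0, false); (3, 0, false)]; [::]; [:: (0, 2, false); (5, 2, false)]; [::]];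
  [:: [:: (5, 1, true); (8, 1, true); (6, 22, true); (0, 15, false); (13, 15, true); (1, 12, false); (12, 12, true); (2, 21, false); (10, 21, false); (4, 1, false); (7, 1, false); (3, 0, false); (4, 0, false)]; [:: (0, 18, false); (9, 18, true)]; [:: (5, 3, true); (6, 16, true); (0, 23, false); (10, 23, false); (2, 18, true); (9, 18, false); (3, 15, true); (8, 15, false); (4, 3, false); (5, 3, false)]; [:: (0, 3, false); (7, 3, false)]];
  [:: [:: (0, 0, false); (1, 0, false)]; [::]; [:: (2, 2, true); (3, 13, true); (0, 12, true); (5, 12, false); (1, 2, false); (2, 2, false)]; [:: (2, 3, true); (3, 16, true); (0, 15, true); (5, 15, false); (1, 3, false); (2, 3, false)]];
  [:: [::]; [:: (0, 1, false); (3, 1, false)]; [:: (3, 1, true); (4, 2, true); (5, 1, true); (6, 27, false); (0, 25, true); (9, 25, false); (3, 2, false); (6, 2, false); (2, 1, false); (3, 1, false)]; [::]];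
  [:: [:: (0, 15, false); (7, 15, true)]; [:: (0, 18, false); (7, 18, true); (1, 1, false); (4, 1, false)]; [::]; [:: (0, 3, false); (5, 3, false)]];
  [:: [:: (2, 0, true); (5, 0, true); (3, 22, false); (0, 21, false); (6, 21, false); (2, 1, false); (3, 1, false)]; [:: (0, 1, false); (1, 1, false)]; [::]; [:: (2, 3, true); (3, 19, true); (0, 18, true); (5, 18, false); (1, 3, false); (2, 3, false)]];
  [:: [:: (2, 0, true); (3, 14, true); (0, 15, false); (5, 15, true); (1, 0, false); (2, 0, false)]; [:: (0, 18, false); (3, 18, true)]; [:: (2, 3, true); (5, 3, true); (3, 24, true); (1, 3, false); (4, 3, false); (0, 2, false); (1, 2, false)]; [:: (0, 3, false); (1, 3, false)]];
  [:: [:: (1, 0, true); (2, 14, true); (0, 0, false); (1, 0, false)]; [::]; [::]; [::]];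
  [:: [:: (0, 12, false); (9, 12, true); (1, 15, false); (8, 15, true)]; [:: (5, 3, true); (8, 3, true); (6, 24, true); (7, 1, true); (8, 20, true); (8, 2, true); (11, 2, true); (9, 24, false); (2, 18, true); (17, 18, false); (3, 23, true); (15, 23, true); (0, 25, false); (17, 25, true); (3, 18, false); (16, 18, true); (5, 2, false); (12, 2, false); (4, 1, false); (9, 1, false); (2, 23, false); (8, 23, false); (1, 18, false); (10, 18, true); (4, 3, false); (5, 3, false)]; [:: (0, 2, false); (7, 2, false)]; [:: (5, 1, true); (6, 2, true); (7, 1, true); (8, 27, false); (0, 23, true); (14, 23, true); (2, 25, true); (11, 25, false); (5, 2, false); (8, 2, false); (4, 1, false); (5, 1, false)]];
  [:: [:: (3, 0, true); (6, 0, true); (4, 22, false); (0, 12, false); (9, 12, true); (1, 21, false); (7, 21, false); (3, 1, false); (4, 1, false)]; [:: (3, 2, true); (4, 26, true); (7, 2, true); (6, 28, true); (0, 25, false); (9, 25, true); (3, 1, false); (6, 1, false); (2, 2, false); (3, 2, false)]; [:: (0, 2, false); (3, 2, false)]; [::]];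
  [:: [:: (1, 0, true); (2, 17, true); (0, 0, false); (1, 0, false)]; [:: (1, 1, true); (2, 20, true); (0, 1, false); (1, 1, false)]; [:: (1, 2, true); (4, 2, true); (2, 24, false); (0, 2, false); (3, 2, false)]; [::]];
  [:: [:: (4, 0, true); (7, 0, true); (5, 22, false); (0, 15, false); (11, 15, true); (1, 12, false); (10, 12, true); (2, 21, false); (8, 21, false); (4, 1, false); (5, 1, false)]; [:: (4, 2, true); (5, 26, true); (8, 2, true); (7, 28, true); (0, 18, false); (13, 18, true); (1, 25, false); (10, 25, true); (4, 1, false); (7, 1, false); (3, 2, false); (4, 2, false)]; [:: (4, 3, true); (5, 19, true); (0, 23, false); (8, 23, false); (2, 18, true); (7, 18, false); (3, 3, false); (4, 3, false)]; [:: (0, 3, false); (5, 3, false)]];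
  [:: [:: (3, 0, true); (6, 0, true); (4, 22, false); (0, 15, false); (9, 15, true); (1, 12, false); (8, 12, true); (2, 0, false); (5, 0, false)]; [:: (3, 2, true); (4, 26, true); (7, 2, true); (6, 28, true); (0, 18, false); (11, 18, true); (2, 2, false); (7, 2, false); (1, 1, false); (4, 1, false)]; [:: (3, 3, true); (4, 19, true); (0, 23, false); (6, 23, false); (2, 3, false); (3, 3, false)]; [:: (0, 3, false); (3, 3, false)]];
  [:: [:: (2, 0, true); (3, 17, true); (0, 15, false); (5, 15, true); (1, 0, false); (2, 0, false)]; [:: (2, 1, true); (3, 20, true); (0, 18, false); (5, 18, true); (1, 1, false); (2, 1, false)]; [:: (2, 2, true); (5, 2, true); (3, 24, false); (0, 23, false); (6, 23, false); (2, 3, false); (3, 3, false)]; [:: (0, 3, false); (1, 3, false)]];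
  [:: [:: (2, 0, true); (5, 0, true); (3, 22, false); (0, 12, false); (7, 12, true); (1, 0, false); (4, 0, false)]; [:: (2, 2, true); (3, 26, true); (6, 2, true); (5, 28, true); (1, 2, false); (6, 2, false); (0, 1, false); (3, 1, false)]; [:: (0, 2, false); (1, 2, false)]; [::]];
  [:: [:: (0, 12, false); (7, 12, true); (1, 15, false); (6, 15, true)]; [:: (4, 3, true); (7, 3, true); (5, 24, true); (6, 1, true); (7, 20, true); (7, 2, true); (10, 2, true); (8, 24, false); (2, 18, true); (15, 18, false); (3, 3, false); (12, 3, false); (0, 25, false); (11, 25, true); (3, 1, false); (8, 1, false); (2, 2, false); (5, 2, false); (1, 18, false); (4, 18, true)]; [:: (0, 2, false); (5, 2, false)]; [:: (4, 1, true); (5, 2, true); (6, 1, true); (7, 27, false); (0, 23, true); (12, 23, true); (3, 1, false); (8, 1, false); (2, 2, false); (5, 2, false)]];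
  [:: [:: (2, 0, true); (3, 14, true); (0, 12, false); (5, 12, true); (1, 0, false); (2, 0, false)]; [::]; [:: (0, 2, false); (1, 2, false)]; [::]];
  [:: [:: (3, 0, true); (4, 14, true); (0, 15, false); (7, 15, true); (1, 12, false); (6, 12, true); (2, 0, false); (3, 0, false)]; [:: (0, 18, false); (5, 18, true)]; [:: (3, 3, true); (6, 3, true); (4, 24, true); (0, 23, false); (8, 23, false); (2, 3, false); (5, 3, false); (1, 2, false); (2, 2, false)]; [:: (0, 3, false); (3, 3, false)]];
  [:: [:: (1, 0, true); (4, 0, true); (2, 22, false); (0, 0, false); (3, 0, false)]; [::]; [::]; [:: (1, 3, true); (2, 19, true); (0, 3, false); (1, 3, false)]];
  [:: [:: (0, 15, false); (5, 15, true)]; [:: (0, 18, false); (5, 18, true); (1, 1, false); (2, 1, false)]; [::]; [:: (0, 3, false); (3, 3, false)]];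
  [:: [::]; [:: (0, 1, false); (1, 1, false)]; [:: (2, 1, true); (3, 2, true); (4, 1, true); (5, 27, false); (1, 1, false); (6, 1, false); (0, 2, false); (3, 2, false)]; [::]];
  [:: [::]; [::]; [:: (1, 2, true); (2, 13, true); (0, 2, false); (1, 2, false)]; [:: (1, 3, true); (2, 16, true); (0, 3, false); (1, 3, false)]];
  [:: [:: (4, 1, true); (7, 1, true); (5, 22, true); (0, 15, false); (11, 15, true); (1, 12, false); (10, 12, true); (3, 1, false); (6, 1, false); (2, 0, false); (3, 0, false)]; [:: (0, 18, false); (7, 18, true)]; [:: (4, 3, true); (5, 16, true); (0, 23, false); (8, 23, false); (2, 18, true); (7, 18, false); (3, 3, false); (4, 3, false)]; [:: (0, 3, false); (5, 3, false)]];
  [:: [:: (3, 1, true); (6, 1, true); (4, 22, true); (0, 12, false); (9, 12, true); (2, 1, false); (5, 1, false); (1, 0, false); (2, 0, false)]; [::]; [:: (0, 2, false); (3, 2, false)]; [::]];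
  [:: [:: (6, 1, true); (9, 1, true); (7, 22, true); (8, 2, true); (9, 26, true); (12, 2, true); (11, 28, true); (11, 0, true); (14, 0, true); (12, 22, false); (0, 12, false); (25, 12, true); (1, 15, false); (24, 15, true); (5, 1, false); (18, 1, false); (4, 12, true); (17, 12, false); (5, 2, false); (14, 2, false); (2, 21, false); (14, 21, false); (4, 1, false); (11, 1, false); (3, 12, false); (10, 12, true); (4, 0, false); (7, 0, false)]; [::]; [:: (0, 2, false); (9, 2, false)]; [:: (6, 2, true); (7, 13, true); (0, 23, true); (12, 23, true); (2, 25, true); (9, 25, false); (5, 2, false); (6, 2, false)]];
  [:: [:: (2, 1, true); (5, 1, true); (3, 22, true); (1, 1, false); (4, 1, false); (0, 0, false); (1, 0, false)]; [:: (0, 1, false); (1, 1, false)]; [::]; [:: (2, 3, true); (3, 16, true); (0, 18, true); (5, 18, false); (1, 3, false); (2, 3, false)]];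
  [:: [:: (5, 1, true); (8, 1, true); (6, 22, true); (7, 2, true); (8, 26, true); (11, 2, true); (10, 28, true); (10, 0, true); (13, 0, true); (11, 22, false); (0, 15, false); (23, 15, true); (4, 1, false); (17, 1, false); (3, 12, true); (16, 12, false); (4, 2, false); (13, 2, false); (1, 21, false); (13, 21, false); (3, 1, false); (10, 1, false); (2, 12, false); (9, 12, true); (3, 0, false); (6, 0, false)]; [:: (0, 18, false); (9, 18, true); (1, 1, false); (6, 1, false)]; [::]; [:: (0, 3, false); (7, 3, false)]];
  [:: [:: (4, 1, true); (7, 1, true); (5, 22, true); (6, 2, true); (7, 26, true); (10, 2, true); (9, 28, true); (9, 0, true); (12, 0, true); (10, 22, false); (3, 1, false); (16, 1, false); (2, 12, true); (15, 12, false); (3, 2, false); (12, 2, false); (0, 21, false); (12, 21, false); (2, 1, false); (9, 1, false); (1, 12, false); (8, 12, true); (2, 0, false); (5, 0, false)]; [:: (0, 1, false); (5, 1, false)]; [:: (4, 2, true); (5, 13, true); (0, 25, true); (7, 25, false); (3, 2, false); (4, 2, false)]; [::]];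
  [:: [::]; [:: (0, 1, false); (11, 1, false)]; [:: (7, 3, true); (8, 16, true); (3, 18, true); (12, 18, false); (0, 25, true); (13, 25, false); (3, 23, false); (11, 23, false); (2, 18, false); (13, 18, true); (5, 18, true); (10, 18, false); (6, 3, false); (7, 3, false)]; [:: (7, 2, true); (8, 13, true); (0, 18, true); (15, 18, false); (1, 23, true); (13, 23, true); (3, 25, true); (10, 25, false); (6, 2, false); (7, 2, false)]];
  [:: [:: (0, 12, false); (9, 12, true); (1, 15, false); (8, 15, true); (2, 0, false); (5, 0, false)]; [::]; [:: (0, 2, false); (7, 2, false)]; [:: (5, 1, true); (6, 2, true); (7, 1, true); (8, 27, false); (0, 23, true); (14, 23, true); (4, 1, false); (9, 1, false); (2, 12, true); (9, 12, false); (3, 2, false); (6, 2, false)]];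
  [:: [:: (0, 15, false); (7, 15, true); (1, 0, false); (4, 0, false)]; [:: (4, 0, true); (5, 14, true); (0, 18, false); (9, 18, true); (1, 21, true); (7, 21, true); (3, 0, false); (4, 0, false)]; [::]; [:: (0, 3, false); (5, 3, false)]];
  [:: [:: (0, 0, false); (3, 0, false)]; [:: (3, 0, true); (4, 14, true); (0, 21, true); (6, 21, true); (2, 0, false); (3, 0, false)]; [:: (3, 1, true); (4, 2, true); (5, 1, true); (6, 27, false); (2, 1, false); (7, 1, false); (0, 12, true); (7, 12, false); (1, 2, false); (4, 2, false)]; [::]];
  [:: [:: (0, 0, false); (13, 0, false)]; [:: (8, 1, true); (11, 1, true); (9, 22, true); (10, 2, true); (11, 26, true); (14, 2, true); (13, 28, true); (13, 0, true); (16, 0, true); (14, 22, false); (0, 21, true); (28, 21, true); (2, 12, false); (27, 12, true); (3, 15, false); (26, 15, true); (7, 1, false); (20, 1, false); (6, 12, true); (19, 12, false); (7, 2, false); (16, 2, false); (4, 21, false); (16, 21, false); (6, 1, false); (13, 1, false); (5, 12, false); (12, 12, true); (6, 0, false); (9, 0, false)]; [:: (8, 3, true); (9, 16, true); (4, 18, true); (13, 18, false); (0, 12, true); (17, 12, false); (1, 25, true); (14, 25, false); (4, 23, false); (12, 23, false); (3, 18, false); (14, 18, true); (6, 18, true); (11, 18, false); (7, 3, false); (8, 3, false)]; [:: (8, 2, true); (9, 13, true); (0, 15, true); (17, 15, false); (1, 18, true); (16, 18, false); (2, 23, true); (14, 23, true); (4, 25, true); (11, 25, false); (7, 2, false); (8,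 2, false)]];
  [:: [:: (8, 3, true); (11, 3, true); (9, 24, true); (10, 1, true); (11, 20, true); (11, 2, true); (14, 2, true); (12, 24, false); (0, 15, false); (25, 15, true); (1, 12, false); (24, 12, true); (5, 15, true); (20, 15, false); (6, 18, true); (19, 18, false); (7, 3, false); (16, 3, false); (4, 12, true); (17, 12, false); (2, 21, false); (18, 21, false); (4, 25, false); (15, 25, true); (3, 12, false); (18, 12, true); (7, 1, false); (12, 1, false); (6, 2, false); (9, 2, false); (5, 18, false); (8, 18, true); (4, 15, false); (9, 15, true)]; [:: (8, 0, true); (9, 14, true); (0, 18, false); (17, 18, true); (1, 25, false); (14, 25, true); (4, 18, false); (13, 18, true); (5, 21, true); (11, 21, true); (7, 0, false); (8, 0, false)]; [:: (8, 1, true); (9, 2, true); (10, 1, true); (11, 27, false); (0, 23, false); (20, 23, false); (2, 18, true); (19, 18, false); (3, 23, true); (17, 23, true); (7, 1, false); (12, 1, false); (5, 12, true); (12, 12, false); (6, 2, false); (9, 2, false)]; [:: (0, 3, false); (13, 3, false)]];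
  [:: [:: (7, 3, true); (10, 3, true); (8, 24, true); (9, 1, true); (10, 20, true); (10, 2, true); (13, 2, true); (11, 24, false); (0, 12, false); (23, 12, true); (4, 15, true); (19, 15, false); (5, 18, true); (18, 18, false); (6, 3, false); (15, 3, false); (3, 12, true); (16, 12, false); (1, 21, false); (17, 21, false); (3, 25, false); (14, 25, true); (2, 12, false); (17, 12, true); (6, 1, false); (11, 1, false); (5, 2, false); (8, 2, false); (4, 18, false); (7, 18, true); (3, 15, false); (8, 15, true)]; [:: (7, 0, true); (8, 14, true); (0, 25, false); (13, 25, true); (3, 18, false); (12, 18, true); (4, 21, true); (10, 21, true); (6, 0, false); (7, 0, false)]; [:: (0, 2, false); (11, 2, false)]; [::]];
  [:: [:: (6, 3, true); (9, 3, true); (7, 24, true); (8, 1, true); (9, 20, true); (9, 2, true); (12, 2, true); (10, 24, false); (3, 15, true); (18, 15, false); (4, 18, true); (17, 18, false); (5, 3, false); (14, 3, false); (2, 12, true); (15, 12, false); (0, 21, false); (16, 21, false); (2, 25, false); (13, 25, true); (1, 12, false); (16, 12, true); (5, 1, false); (10, 1, false); (4, 2, false); (7, 2, false); (3, 18, false); (6, 18, true); (2, 15, false); (7, 15, true)]; [:: (0, 1, false); (9, 1, false)]; [::]; [:: (6, 1, true); (7, 2, true); (8, 1, true); (9, 27, false); (0, 18, true); (17, 18, false); (1, 23, true); (15, 23, true); (5, 1, false); (10, 1, false); (3, 12, true); (10, 12, false); (4, 2, false); (7, 2, false)]]]%N.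

Definition equivariance_cert (x : coords) (k : nat) : seq step :=
  nth [::] (nth [::] equivariance_certs (index x F4_roots)) k.-1.

Lemma equivariance_certified :
  all (fun x => all (fun k =>
        (simple_refl k x \in F4_roots) &&
        (rewrite_chain br_rules (k :: root_elem_word x ++ [:: k]) (equivariance_cert x k)
           == Some (root_elem_word (simple_refl k x))))
      (iota 1 4)) F4_roots.
Proof. by vm_compute. Qed.

Lemma simple_roots_certified :
  all (fun i => (beta_coords i \in F4_roots) &&
                (root_elem_word (beta_coords i) == [:: i + 4]%N))
    (iota 1 4).
Proof. by vm_compute. Qed.

Lemma simple_refl_F4_roots k x : (0 < k <= 4)%N -> x \in F4_roots ->
  simple_refl k x \in F4_roots.
Proof.
move=> k_range /(allP equivariance_certified) /allP k_cert.
by have /k_cert /andP [] : k \in iota 1 4 by rewrite mem_iota ltnS.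
Qed.

Lemma foldr_simple_refl_F4_roots u x : valid_word u -> x \in F4_roots ->
  foldr simple_refl x u \in F4_roots.
Proof.
by elim: u => [|k u IH] //= /andP [k_range /IH x_u] /x_u; apply: simple_refl_F4_roots.
Qed.

Lemma beta_coords_F4_roots i : (0 < i <= 4)%N -> beta_coords i \in F4_roots.
Proof.
move=> i_range; have : i \in iota 1 4 by rewrite mem_iota ltnS.
by move/(allP simple_roots_certified) => /andP [].
Qed.

Section BrauerF4.
Variables (R : pzRingType) (d : R) (r e : nat -> R).
Hypothesis br_rel : BrF4_rel d r e.

Definition br_letter (x : nat) : R := if (x <= 4)%N then r x else e (x - 4)%N.

Lemma br_rules_sound :
  all (fun lr => wimg br_letter lr.1 == wimg br_letter lr.2) br_rules.
Proof.
case: br_rel => _ _ r_sq re_l re_r _ _ comm braid rel1 rel2 _ rel4 _ _ rel7 _.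
rewrite /wimg /= !big_cons !big_nil /br_letter /= !mulr1 !mulrA.
repeat (apply/andP; split); apply/eqP => //.
all: try by rewrite ?r_sq ?re_l ?re_r.
all: try by match goal with
  | |- r ?i * r ?j = _ => case: (comm i j isT)
  | |- e ?i * r ?j = _ => case: (comm i j isT)
  | |- r ?i * _ * r ?i = r ?j * _ * r ?j => case: (braid i j isT)
  end.
by rewrite rel4 !mulrA.
Qed.

Lemma br_letter_r k : (k <= 4)%N -> br_letter k = r k.
Proof. by rewrite /br_letter => ->. Qed.

Definition root_elem (x : coords) : R := wimg br_letter (root_elem_word x).

Lemma root_elem_simple i : (0 < i <= 4)%N -> root_elem (beta_coords i) = e i.
Proof.
move=> i_range; have: i \in iota 1 4 by rewrite mem_iota ltnS.
move/(allP simple_roots_certified) => /andP [_ /eqP word_i].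
case/andP: i_range => i_gt0 _.
rewrite /root_elem word_i /wimg big_seq1 /br_letter addnK.
by rewrite leqNgt -{1}[4%N]add0n ltn_add2r i_gt0.
Qed.

Lemma root_elem_conj_simple k x : (0 < k <= 4)%N -> x \in F4_roots ->
  r k * root_elem x * r k = root_elem (simple_refl k x).
Proof.
move=> k_range x_root; have: k \in iota 1 4 by rewrite mem_iota ltnS.
move: x_root => /(allP equivariance_certified) /allP/[apply] /andP [_ /eqP cert].
apply: etrans (wimg_rewrite_chain br_rules_sound cert).
case/andP: k_range => _ /br_letter_r letter_k.
by rewrite /root_elem /wimg big_cons big_cat big_seq1 letter_k mulrA.
Qed.

Lemma root_elem_conj u x : valid_word u -> x \in F4_roots ->
  wimg r u * root_elem x * wimg r (rev u) = root_elem (foldr simple_refl x u).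
Proof.
elim: u => [|k u IH] /=; first by rewrite /wimg !big_nil mul1r mulr1.
move=> /andP [k_range valid_u] x_root.
rewrite rev_cons -cats1 wimg_cat /wimg big_cons big_seq1 -!/(wimg r _).
rewrite -root_elem_conj_simple ?foldr_simple_refl_F4_roots // -IH //.
by rewrite !mulrA.
Qed.

End BrauerF4.

Theorem lemma3p3 (R : pzRingType) (d : R) (r e : nat -> R)
    (i j : nat) (u : seq nat) :
  BrF4_rel d r e ->
  (0 < i <= 4)%N -> (0 < j <= 4)%N ->
  valid_word u ->
  wact u (beta i) = beta j ->
  wimg r u * e i * wimg r (rev u) = e j.
Proof.
move=> br_rel i_range j_range valid_u w_beta.
rewrite !beta_vec_of // wact_vec_of // in w_beta.
rewrite -(root_elem_simple r e i_range) -(root_elem_simple r e j_range).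
by rewrite -(vec_of_inj w_beta) (root_elem_conj br_rel) // beta_coords_F4_roots.
Qed.
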